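(* Let $(F_0,F_1,F_2)$ be a gapset filtration such that $\max F_0=\max F_1=\max F_2=m$. Let $F'_i=F_i\setminus\{m\}$ for $i=0,1,2$. Then $(F'_0,F'_1,F'_2)$ is a gapset filtration.
   Context: A gapset is a finite set $G \subset \mathbb{N}_+$ such that for all $z \in G$, whenever $z=x+y$ with $x,y\in\mathbb{N}_+$, we have $x\in G$ or $y\in G$. For $k\ge1$, a $k$-filtration is a sequence $(F_0,\dots,F_t)$ with $F_0=[1,k-1]\supseteq F_1\supseteq\dots\supseteq F_t$; it is a gapset filtration if $\bigcup_i(ik+F_i)$ is a gapset (so a filtration $(F_0,F_1,F_2)$ with $\max F_0=m$ is an $(m+1)$-filtration, and $(F'_0,F'_1,F'_2)$ is considered as an $m$-filtration). Here $j+A=\{j+a:a\in A\}$. *)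

From Stdlib Require Import Arith Lia.

Definition is_gapset (G : nat -> Prop) : Prop :=
  (exists N, forall z, G z -> 1 <= z <= N) /\
  (forall z x y, G z -> 1 <= x -> 1 <= y -> z = x + y -> G x \/ G y).

Definition is_filtration (k t : nat) (F : nat -> nat -> Prop) : Prop :=
  1 <= k /\
  (forall x, F 0 x <-> 1 <= x <= k - 1) /\
  (forall i x, i < t -> F (S i) x -> F i x).

Definition filtration_union (k t : nat) (F : nat -> nat -> Prop) : nat -> Prop :=
  fun z => exists i a, i <= t /\ F i a /\ z = i * k + a.

Definition is_gapset_filtration (k t : nat) (F : nat -> nat -> Prop) : Prop :=
  is_filtration k t F /\ is_gapset (filtration_union k t F).

Definition is_max (A : nat -> Prop) (m : nat) : Prop :=
  A m /\ forall x, A x -> x <= m.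

(* With k = m + 1 the old gapset is G = [1,m] ∪ (k + F_1) ∪ (2k + F_2), and the new one is
   G' = [1,m-1] ∪ (m + F'_1) ∪ (2m + F'_2).  A sum x + y in G' with both summands
   >= m must lie on level 2, say 2m + a with a in F_2.  If a summand equals m, the other
   is m + a with a in F'_1.  Otherwise x = m + b and y = m + c with b, c >= 1, so that
   2k + a = (k + b) + (k + c) is split inside G, and since b, c < m the summand found in G
   lies on level 1, i.e. b or c is in F_1. *)
From Stdlib Require Import Arith Lia.

Lemma filtration_sub_base k t F i a :
  is_filtration k t F -> i <= t -> F i a -> F 0 a.
Proof.
  intros [_ [_ Hdec]].
  induction i as [|i IH]; intros Hi Ha; [exact Ha|].
  apply IH; [lia|]. apply Hdec; [lia|exact Ha].
Qed.

Lemma filtration_range k t F i a :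
  is_filtration k t F -> i <= t -> F i a -> 1 <= a <= k - 1.
Proof.
  intros HF Hi Ha. apply (proj1 (proj2 HF)).
  exact (filtration_sub_base k t F i a HF Hi Ha).
Qed.

Lemma filtration_union_base k t F x :
  is_filtration k t F -> 1 <= x <= k - 1 -> filtration_union k t F x.
Proof.
  intros [_ [H0 _]] Hx. exists 0, x.
  split; [lia|]. split; [apply H0; exact Hx|lia].
Qed.

Lemma filtration_union_level k t F z i a :
  is_filtration k t F -> filtration_union k t F z ->
  z = i * k + a -> 1 <= a <= k - 1 -> F i a.
Proof.
  intros HF [j [d [Hj [Hd Hzj]]]] Hzi Ha.
  pose proof (filtration_range k t F j d HF Hj Hd) as Hdk.
  assert (Hij : i = j).
  { rewrite (Nat.div_unique z k i a), (Nat.div_unique z k j d); lia. }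
  subst j. replace a with d by lia. exact Hd.
Qed.

Lemma filtration_union_bounded k t F :
  is_filtration k t F -> exists N, forall z, filtration_union k t F z -> 1 <= z <= N.
Proof.
  intros HF. exists (t * k + k). intros z [i [a [Hi [Ha ->]]]].
  pose proof (filtration_range k t F i a HF Hi Ha). nia.
Qed.

Definition filtration_remove (F : nat -> nat -> Prop) (m : nat) : nat -> nat -> Prop :=
  fun i x => F i x /\ x <> m.

Lemma filtration_remove_top k t F :
  1 <= k -> is_filtration (k + 1) t F -> is_filtration k t (filtration_remove F k).
Proof.
  intros Hk [_ [H0 Hdec]]. split; [exact Hk|split].
  - intros x. unfold filtration_remove. rewrite H0. lia.
  - intros i x Hi [Hx Hxk]. split; [apply Hdec|]; assumption.
Qed.

Lemma filtration_remove_top_closed m F :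
  1 <= m -> is_gapset_filtration (m + 1) 2 F ->
  forall z x y, filtration_union m 2 (filtration_remove F m) z ->
  1 <= x -> 1 <= y -> z = x + y ->
  filtration_union m 2 (filtration_remove F m) x \/
  filtration_union m 2 (filtration_remove F m) y.
Proof.
  intros Hm [HF [_ Hclosed]] z x y [i [a [Hi [[Ha Ham] Hz]]]] Hx Hy Hxy.
  pose proof (filtration_remove_top m 2 F Hm HF) as HF'.
  pose proof (filtration_range _ _ _ i a HF Hi Ha) as Har.
  destruct (Nat.lt_ge_cases x m) as [Hxm|Hxm].
  { left. apply (filtration_union_base _ _ _ x HF'). lia. }
  destruct (Nat.lt_ge_cases y m) as [Hym|Hym].
  { right. apply (filtration_union_base _ _ _ y HF'). lia. }
  destruct i as [|[|[|i]]]; try lia.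
  assert (Ha1 : F 1 a) by (apply (proj2 (proj2 HF)); [lia|exact Ha]).
  assert (Hlevel1 : forall b, F 1 b -> b <> m ->
            filtration_union m 2 (filtration_remove F m) (m + b)).
  { intros b Hb Hbm. exists 1, b. split; [lia|]. split; [split; assumption|lia]. }
  destruct (Nat.eq_dec x m) as [->|Hxm'].
  { right. replace y with (m + a) by lia. apply Hlevel1; assumption. }
  destruct (Nat.eq_dec y m) as [->|Hym'].
  { left. replace x with (m + a) by lia. apply Hlevel1; assumption. }
  assert (Hlift : forall w, m < w < m + a ->
            filtration_union (m + 1) 2 F (m + 1 + (w - m)) ->
            filtration_union m 2 (filtration_remove F m) w).
  { intros w Hw Hu. replace w with (m + (w - m)) by lia.
    apply Hlevel1; [|lia].
    apply (filtration_union_level _ _ _ _ 1 (w - m) HF Hu); lia. }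
  assert (Hz2 : filtration_union (m + 1) 2 F (2 * (m + 1) + a)).
  { exists 2, a. split; [lia|]. split; [exact Ha|lia]. }
  destruct (Hclosed _ (m + 1 + (x - m)) (m + 1 + (y - m)) Hz2 ltac:(lia) ltac:(lia) ltac:(lia))
    as [Gx|Gy].
  - left. apply Hlift; [lia|exact Gx].
  - right. apply Hlift; [lia|exact Gy].
Qed.

Theorem mainTheorem15 (F : nat -> nat -> Prop) (m : nat) :
  is_gapset_filtration (m + 1) 2 F ->
  is_max (F 0) m -> is_max (F 1) m -> is_max (F 2) m ->
  is_gapset_filtration m 2 (fun i x => F i x /\ x <> m).
Proof.
  (* Only m ∈ F_0, i.e. m >= 1, is needed. *)
  intros HG [Hm0 _] _ _.
  pose proof (proj1 HG) as HF.
  assert (Hm : 1 <= m) by (pose proof (filtration_range _ _ _ 0 m HF ltac:(lia) Hm0); lia).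
  pose proof (filtration_remove_top m 2 F Hm HF) as HF'.
  split; [exact HF'|split].
  - exact (filtration_union_bounded _ _ _ HF').
  - exact (filtration_remove_top_closed m F Hm HG).
Qed.
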